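(* Let $(P,\preceq)$ be a locally finite meet semilattice, $S\subseteq P$ a finite meet closed set, and suppose $x_i\in S$ generates a double-chain set in $S$, with $\mathrm{meetcl}(C_S(x_i))\setminus C_S(x_i)=A_i\cup B_i$ where $A_i,B_i$ are disjoint chains. Then there is at most one element $z\in C_S(x_i)$ that attaches to both $A_i$ and $B_i$.
   Context: $C_S(x)$ is the set of elements of $S$ covered by $x$ in $S$; $\mathrm{meetcl}(C)$ is the set of all finite meets of elements of $C$. An element $x\in S$ generates a double-chain set in $S$ if $\mathrm{meetcl}(C_S(x))\setminus C_S(x)$ is a union of two disjoint (possibly empty) chains. Given such chains $A_i,B_i$ for $x_i$, an element $z\in C_S(x_i)$ attaches to $A_i$ (resp. $B_i$) if there is $a\in A_i$ (resp. $b\in B_i$) that is covered by $z$ in the poset $\mathrm{meetcl}(C_S(x_i))$. *)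

From mathcomp Require Import all_boot all_order.
Set Implicit Arguments. Unset Strict Implicit. Unset Printing Implicit Defensive.
Import Order.Theory.
Local Open Scope order_scope.

Section Defs.
Context {d : Order.disp_t} {T : meetSemilatticeType d}.

Definition locally_finite : Prop :=
  forall a b : T, exists s : seq T, forall y : T, a <= y -> y <= b -> y \in s.

Definition finite_set (S : T -> Prop) : Prop :=
  exists s : seq T, forall y, S y -> y \in s.

Definition meet_closed_set (S : T -> Prop) : Prop :=
  forall a b, S a -> S b -> S (a `&` b).

Definition covered_in (Q : T -> Prop) (y x : T) : Prop :=
  Q y /\ Q x /\ y < x /\ ~ (exists q, Q q /\ y < q /\ q < x).

Definition covset (S : T -> Prop) (x : T) : T -> Prop :=
  fun y => covered_in S y x.

Definition meetcl (C : T -> Prop) : T -> Prop :=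
  fun y => exists (x0 : T) (s : seq T),
    C x0 /\ (forall c, c \in s -> C c) /\ y = foldl Order.meet x0 s.

Definition is_chain (A : T -> Prop) : Prop :=
  forall a b, A a -> A b -> (a <= b) || (b <= a).

Definition attaches (S : T -> Prop) (x : T) (A : T -> Prop) (z : T) : Prop :=
  exists a, A a /\ covered_in (meetcl (covset S x)) a z.

End Defs.

(* If z1 and z2 both attach to A and to B but are distinct, they are
   incomparable, since C_S(x) is an antichain; so m := z1 `&` z2 is an element of
   meetcl(C_S(x)) strictly below both.  The attachment points a1, a2 in A lie
   below z1, z2 and are comparable, so the smaller one, say a1, also lies below m;
   as a1 is covered by z1 in meetcl(C_S(x)), a1 = m.  Hence m is in A, and in the
   same way m is in B, contradicting the disjointness of A and B. *)
From mathcomp Require Import all_boot all_order.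
Set Implicit Arguments. Unset Strict Implicit. Unset Printing Implicit Defensive.
Import Order.Theory.
Local Open Scope order_scope.

Section CoveringInMeetClosure.
Context {d : Order.disp_t} {T : meetSemilatticeType d}.

Lemma meet_ltl_nle (a b : T) : ~~ (a <= b) -> a `&` b < a.
Proof. by move=> nab; rewrite lt_neqAle eq_meetl leIl andbT. Qed.

Lemma meet_ltr_nle (a b : T) : ~~ (b <= a) -> a `&` b < b.
Proof. by rewrite meetC; apply: meet_ltl_nle. Qed.

Lemma covered_in_le (Q : T -> Prop) (a z : T) : covered_in Q a z -> a <= z.
Proof. by case=> _ [_ [/ltW]]. Qed.

Lemma covered_in_eq (Q : T -> Prop) (a z m : T) :
  covered_in Q a z -> Q m -> a <= m -> m < z -> a = m.
Proof.
move=> [_ [_ [_ no_between]]] Qm + mz.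
rewrite le_eqVlt => /orP [/eqP // | am].
by case: no_between; exists m.
Qed.

Lemma covset_le_eq (S : T -> Prop) (x z1 z2 : T) :
  covset S x z1 -> covset S x z2 -> z1 <= z2 -> z1 = z2.
Proof.
move=> [S1 [_ [_ no_between]]] [S2 [_ [z2x _]]].
rewrite le_eqVlt => /orP [/eqP // | lt12].
by case: no_between; exists z2.
Qed.

Lemma meetcl_meet (C : T -> Prop) (a b : T) : C a -> C b -> meetcl C (a `&` b).
Proof. by move=> Ca Cb; exists a, [:: b]; split; [|split] => // c; rewrite inE => /eqP ->. Qed.

Lemma chain_covers_meet (Q C : T -> Prop) (z1 z2 u v : T) :
  is_chain C -> C u -> C v ->
  covered_in Q u z1 -> covered_in Q v z2 ->
  Q (z1 `&` z2) -> z1 `&` z2 < z1 -> z1 `&` z2 < z2 ->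
  C (z1 `&` z2).
Proof.
move=> chC Cu Cv cov_u cov_v Qm m_lt1 m_lt2.
have u_le1 := covered_in_le cov_u; have v_le2 := covered_in_le cov_v.
case/orP: (chC u v Cu Cv) => [uv | vu].
- have um : u <= z1 `&` z2 by rewrite lexI u_le1 (le_trans uv v_le2).
  by rewrite -(covered_in_eq cov_u Qm um m_lt1).
- have vm : v <= z1 `&` z2 by rewrite lexI v_le2 (le_trans vu u_le1).
  by rewrite -(covered_in_eq cov_v Qm vm m_lt2).
Qed.

End CoveringInMeetClosure.

Theorem lemma2p3 (d : Order.disp_t) (T : meetSemilatticeType d)
  (S : T -> Prop) (x : T) (A B : T -> Prop) :
  locally_finite (T := T) ->
  finite_set S -> meet_closed_set S -> S x ->
  is_chain A -> is_chain B ->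
  (forall y, ~ (A y /\ B y)) ->
  (forall y, (meetcl (covset S x) y /\ ~ covset S x y) <-> (A y \/ B y)) ->
  forall z1 z2 : T,
    covset S x z1 -> attaches S x A z1 -> attaches S x B z1 ->
    covset S x z2 -> attaches S x A z2 -> attaches S x B z2 ->
    z1 = z2.
Proof.
move=> _ _ _ _ chA chB disjAB _ z1 z2 cov1 [a1 [Aa1 a1z1]] [b1 [Bb1 b1z1]]
  cov2 [a2 [Aa2 a2z2]] [b2 [Bb2 b2z2]].
have [le12 | n12] := boolP (z1 <= z2); first exact: covset_le_eq cov1 cov2 le12.
have [le21 | n21] := boolP (z2 <= z1); first exact/esym/(covset_le_eq cov2 cov1).
have Qm := meetcl_meet cov1 cov2.
have m_lt1 := meet_ltl_nle n12; have m_lt2 := meet_ltr_nle n21.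
case: (disjAB (z1 `&` z2)); split.
- exact: chain_covers_meet chA Aa1 Aa2 a1z1 a2z2 Qm m_lt1 m_lt2.
- exact: chain_covers_meet chB Bb1 Bb2 b1z1 b2z2 Qm m_lt1 m_lt2.
Qed.
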